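(* Consider a student–teacher interaction on an unknown state $\rho$: for $i=1,\dots,M$, an adaptively chosen rank-one observable $O_i=|\psi^i\rangle\langle\psi^i|$ arrives, the student outputs a guess $\hat o_i$ for $\mathrm{tr}(O_i\rho)$, and the teacher either passes or declares a mistake and supplies a value $o_i'$. Suppose the teacher satisfies, for all $i\in[M]$: if $|\mathrm{tr}(O_i\rho)-\hat o_i|>\epsilon$ it declares a mistake; if $|\mathrm{tr}(O_i\rho)-\hat o_i|\le\frac34\epsilon$ it always passes; if it declares a mistake, the supplied $o'_i$ satisfies $|\mathrm{tr}(O_i\rho)-o_i'|\le\frac14\epsilon$. Then there is a student algorithm using $\tilde{\mathcal{O}}(\log M/\epsilon^3)$ copies of $\rho$ that provides guesses $\hat o_i$ while making at most $\mathcal{O}(1/\epsilon^2)$ mistakes, with probability at least $1-\delta$.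
   Context: $\tilde{\mathcal{O}}$ hides factors polylogarithmic in $1/\epsilon$ and $1/\delta$. A ''mistake'' is a round in which the teacher declares a mistake. Each $O_i$ may depend on all previous observables, guesses and teacher responses. *)

From HB Require Import structures.
From mathcomp Require Import all_boot all_order all_algebra.
From mathcomp Require Import complex mxtens.
From mathcomp Require Import reals exp.

Set Implicit Arguments.
Unset Strict Implicit.
Unset Printing Implicit Defensive.
Import Order.TTheory GRing.Theory Num.Theory.
Local Open Scope ring_scope.

Section Learning.
Variable R : realType.
Local Notation C := (R[i]).

Definition cR (x : R) : C := Complex x 0.

Definition adj m n (A : 'M[C]_(m, n)) : 'M[C]_(n, m) := (map_mx Num.conj A)^T.

(* density matrix: positive semidefinite (v^* rho v is a nonnegative real for
   all v, which over C also forces hermiticity) with unit trace *)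
Definition density d (rho : 'M[C]_d) : Prop :=
  (forall v : 'cV[C]_d, 0 <= (adj v *m rho *m v) 0 0) /\ \tr rho = 1.

Definition unitvec d (psi : 'cV[C]_d) : Prop := adj psi *m psi = 1%:M.
Definition proj1 d (psi : 'cV[C]_d) : 'M[C]_d := psi *m adj psi.

(* An entry of the public (classical) transcript of one round:
   observable O_i, student's guess, teacher's response
   (None = pass, Some o' = mistake declared with supplied value o'). *)
Definition ventry d := ('M[C]_d * R * option R)%type.

(* Adversary choosing the next (rank-one) observable from the public
   transcript; it returns the vector psi with O_i = |psi><psi|. *)
Definition adversary d := seq (ventry d) -> 'cV[C]_d.

Definition teacher d := seq (ventry d) -> 'M[C]_d -> R -> option R.

Definition good_teacher d (rho : 'M[C]_d) (eps : R) (T : teacher d) : Prop :=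
  forall h (psi : 'cV[C]_d) (og : R), unitvec psi ->
  let O := proj1 psi in
  let t := \tr (O *m rho) in
  (cR eps < `|t - cR og| -> T h O og <> None) /\
  (`|t - cR og| <= cR (3 / 4 * eps) -> T h O og = None) /\
  (forall o', T h O og = Some o' -> `|t - cR o'| <= cR (eps / 4)).

(* A student's private history entry: observable, measurement outcome,
   guess, teacher response. *)
Definition sentry d k := ('M[C]_d * 'I_k * R * option R)%type.

Definition vis d k (h : seq (sentry d k)) : seq (ventry d) :=
  map (fun e => (e.1.1.1, e.1.2, e.2)) h.

(* A general (adaptive, quantum) student using [ncopies] copies of rho:
   its quantum memory holds rho^{(x) ncopies} (x) |0><0| (an ancilla of
   dimension anc.+1).  In each round, depending on its classical history and
   the current observable, it applies a quantum instrument with Kraus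
   operators [instr h O g] (outcomes g : 'I_nout) and outputs the guess
   [guess h O g]. *)
Record student (d : nat) := Student {
  ncopies : nat;
  anc : nat;
  nout : nat;
  instr : seq (sentry d nout) -> 'M[C]_d -> 'I_nout ->
          'M[C]_(d ^ ncopies * anc.+1);
  guess : seq (sentry d nout) -> 'M[C]_d -> 'I_nout -> R;
  instr_complete : forall h O,
    \sum_(g < nout) adj (instr h O g) *m instr h O g = 1%:M
}.

Definition nmistakes d k (h : seq (sentry d k)) : nat :=
  count (fun e : sentry d k => e.2 != None) h.

Section Run.
Variables (d : nat) (S : student d) (adv : adversary d) (T : teacher d)
          (bound : R).
Local Notation D := (d ^ ncopies S * (anc S).+1)%N.

(* Probability (as a complex number, via the unnormalised post-measurement
   state sigma) that after n more rounds the total number of mistakes is at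
   most [bound]. *)
Fixpoint runp (n : nat) (sigma : 'M[C]_D) (h : seq (sentry d (nout S))) : C :=
  match n with
  | 0 => if ((nmistakes h)%:R <= bound) then \tr sigma else 0
  | n'.+1 =>
      let O := proj1 (adv (vis h)) in
      \sum_(g < nout S)
        let K := @instr d S h O g in
        let og := @guess d S h O g in
        let r := T (vis h) O og in
        runp n' (K *m sigma *m adj K) (rcons h (O, g, og, r))
  end.
End Run.

Definition init_state d (S : student d) (rho : 'M[C]_d)
  : 'M[C]_(d ^ ncopies S * (anc S).+1) :=
  tensmx (ntensmx rho (ncopies S)) (delta_mx (0 : 'I_(anc S).+1) 0).

Definition success_prob d (S : student d) (rho : 'M[C]_d) (adv : adversary d)
  (T : teacher d) (M : nat) (bound : R) : C :=
  @runp d S adv T bound M (init_state S rho) [::].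

End Learning.

From HB Require Import structures.
From mathcomp Require Import all_boot all_order all_algebra.
From mathcomp Require Import complex mxtens.
From mathcomp Require Import reals exp.
From mathcomp Require Import lra ring.
Import Order.TTheory GRing.Theory Num.Theory.
Local Open Scope ring_scope.

Set Implicit Arguments.
Unset Strict Implicit.
Unset Printing Implicit Defensive.

(* The student needs no copies of rho.  It keeps the estimate sigma, the sum
   of the corrections (o' - g) O over its past mistakes, and guesses
   g = Re tr(O sigma).  As O is a rank-one projector, ||O||_HS = 1, so a
   correction in the direction O changes the squared Hilbert-Schmidt distance
   ||rho - sigma||^2 by exactly (t - o')^2 - (t - g)^2, where t = tr(O rho).
   On a declared mistake |t - g| > 3 eps / 4 and |t - o'| <= eps / 4, so the
   distance drops by at least eps^2 / 2.  It starts at tr(rho^2) <= 1, hence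
   at most 2 / eps^2 mistakes occur, with certainty. *)

Section ComplexParts.
Variable R : realType.
Local Notation C := R[i].
Local Notation Re := (@complex.Re R).
Local Notation Im := (@complex.Im R).

Lemma Re_mulc (x y : C) : Re (x * y) = Re x * Re y - Im x * Im y.
Proof. by case: x y => [a b] [c e]. Qed.

Lemma Im_mulc (x y : C) : Im (x * y) = Re x * Im y + Im x * Re y.
Proof. by case: x y => [a b] [c e]. Qed.

Lemma Re_conjc (x : C) : Re x^* = Re x.
Proof. by case: x. Qed.

Lemma Im_conjc (x : C) : Im x^* = - Im x.
Proof. by case: x. Qed.

Lemma ge0_cR (t : C) : 0 <= t -> t = cR (Re t).
Proof. by case: t => a b; rewrite lecE /= => /andP[/eqP -> _]. Qed.

Lemma norm_sub_cR (t : C) (x : R) : 0 <= t -> `|t - cR x| = cR `|Re t - x|.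
Proof.
move/ge0_cR => ->; rewrite /cR; simpc.
by rewrite expr0n addr0 sqrtr_sqr.
Qed.

End ComplexParts.

Section HilbertSchmidt.
Variables (R : realType) (d : nat).
Local Notation C := R[i].
Local Notation Re := (@complex.Re R).
Local Notation Im := (@complex.Im R).

(* Re tr(A^* B), written entrywise. *)
Definition hs_dot (A B : 'M[C]_d) : R :=
  \sum_i \sum_j (Re (A i j) * Re (B i j) + Im (A i j) * Im (B i j)).

Lemma hs_dot_self_ge0 (A : 'M[C]_d) : 0 <= hs_dot A A.
Proof.
apply: sumr_ge0 => i _; apply: sumr_ge0 => j _.
by rewrite addr_ge0 // -expr2 sqr_ge0.
Qed.

Lemma hs_dotBr (O A B : 'M[C]_d) : hs_dot O (A - B) = hs_dot O A - hs_dot O B.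
Proof.
rewrite /hs_dot -sumrB; apply: eq_bigr => i _.
rewrite -sumrB; apply: eq_bigr => j _.
rewrite !mxE !raddfB /=; ring.
Qed.

Lemma hs_dot_subZ (A O : 'M[C]_d) (b : R) :
  hs_dot (A - cR b *: O) (A - cR b *: O)
  = hs_dot A A - 2 * b * hs_dot O A + b ^+ 2 * hs_dot O O.
Proof.
rewrite /hs_dot !mulr_sumr -!sumrB -big_split /=; apply: eq_bigr => i _.
rewrite !mulr_sumr -!sumrB -big_split /=; apply: eq_bigr => j _.
rewrite !mxE !raddfB /= !Re_mulc !Im_mulc /=; ring.
Qed.

Definition hermitian (A : 'M[C]_d) : Prop := adj A = A.

Lemma hermitianP (A : 'M[C]_d) :
  hermitian A <-> forall i j, A j i = (A i j)^*.
Proof.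
split=> [/matrixP HA i j | HA]; first by rewrite -HA !mxE.
by apply/matrixP => i j; rewrite !mxE HA.
Qed.

Lemma hermitian_Re_trace_mul (O X : 'M[C]_d) :
  hermitian O -> Re (\tr (O *m X)) = hs_dot O X.
Proof.
move/hermitianP => HO; rewrite /mxtrace raddf_sum /hs_dot.
under eq_bigr do rewrite mxE raddf_sum.
rewrite exchange_big /=; apply: eq_bigr => i _; apply: eq_bigr => j _.
by rewrite HO Re_mulc Re_conjc Im_conjc; ring.
Qed.

End HilbertSchmidt.

Section RankOneProjector.
Variables (R : realType) (d : nat).
Local Notation C := R[i].
Implicit Types (psi : 'cV[C]_d).

Lemma adj_mul m n p (A : 'M[C]_(m, n)) (B : 'M[C]_(n, p)) :
  adj (A *m B) = adj B *m adj A.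
Proof. by rewrite /adj map_mxM trmx_mul. Qed.

Lemma adjK m n (A : 'M[C]_(m, n)) : adj (adj A) = A.
Proof. by apply/matrixP => i j; rewrite /adj !mxE conjCK. Qed.

Lemma adj1 n : adj (1%:M : 'M[C]_n) = 1%:M.
Proof. by rewrite /adj map_mx1 trmx1. Qed.

Lemma proj1_hermitian psi : hermitian (proj1 psi).
Proof. by rewrite /hermitian /proj1 adj_mul adjK. Qed.

Lemma proj1_idem psi : unitvec psi -> proj1 psi *m proj1 psi = proj1 psi.
Proof. by move=> u1; rewrite /proj1 mulmxA -(mulmxA psi) u1 mulmx1. Qed.

Lemma mxtrace_proj1 psi : unitvec psi -> \tr (proj1 psi) = 1.
Proof. by move=> u1; rewrite /proj1 mxtrace_mulC u1 mxtrace1. Qed.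

Lemma hs_dot_proj1 psi : unitvec psi -> hs_dot (proj1 psi) (proj1 psi) = 1.
Proof.
move=> u1; rewrite -hermitian_Re_trace_mul ?proj1_idem ?mxtrace_proj1 //.
exact: proj1_hermitian.
Qed.

Lemma mxtrace_proj1_mul psi (A : 'M[C]_d) :
  \tr (proj1 psi *m A) = (adj psi *m A *m psi) 0 0.
Proof. by rewrite /proj1 -mulmxA mxtrace_mulC /mxtrace big_ord1. Qed.

End RankOneProjector.

Lemma le_mul_of_quadratics_ge0 (R : realFieldType) (p q n : R) :
  0 <= p -> 0 <= q ->
  (forall s, 0 <= s ^+ 2 * p - 2 * s * n + n * q) ->
  (forall s, 0 <= s ^+ 2 * q - 2 * s * n + n * p) ->
  n <= p * q.
Proof.
move=> p_ge0 q_ge0 quad_pq quad_qp.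
have := quad_pq 1; have := quad_pq q; have := quad_qp p.
have [->|q_neq0] := eqVneq q 0.
  have [->|p_neq0] := eqVneq p 0; first lra.
  have : 0 < p by rewrite lt_def p_neq0.
  nra.
have : 0 < q by rewrite lt_def q_neq0.
nra.
Qed.

Section PositiveSemidefinite.
Variables (R : realType) (d : nat) (rho : 'M[R[i]]_d).
Local Notation C := R[i].
Local Notation Re := (@complex.Re R).
Local Notation Im := (@complex.Im R).
Hypothesis rho_psd : forall v : 'cV[C]_d, 0 <= (adj v *m rho *m v) 0 0.

Lemma adj_delta_lin (i j : 'I_d) (x y : C) :
  adj (x *: delta_mx i 0 + y *: delta_mx j 0 : 'cV[C]_d)
  = x^* *: delta_mx 0 i + y^* *: delta_mx 0 j.
Proof.
apply/matrixP => a b; rewrite /adj !mxE rmorphD !rmorphM !rmorph_nat.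
by rewrite !(andbC (a == 0)).
Qed.

Lemma psd_form2 (i j : 'I_d) (x y : C) :
  0 <= x^* * x * rho i i + x^* * y * rho i j + y^* * x * rho j i
       + y^* * y * rho j j.
Proof.
have := rho_psd (x *: delta_mx i 0 + y *: delta_mx j 0).
rewrite adj_delta_lin !mulmxDl !mulmxDr -!scalemxAl -!scalemxAr.
by rewrite -!rowE -!colE !mxE; congr (_ <= _); ring.
Qed.

Lemma psd_diag (i : 'I_d) : 0 <= rho i i.
Proof.
have := psd_form2 i i 1 0.
by rewrite rmorph1 rmorph0 !mulr0 !mul0r !addr0 !mul1r.
Qed.

Lemma psd_hermitian : hermitian rho.
Proof.
apply/hermitianP => i j.
have := psd_form2 i j 1 1; have := psd_form2 i j 1 'i.
have := psd_diag i; have := psd_diag j.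
case: (rho i i) (rho i j) (rho j i) (rho j j)
  => [a1 b1] [a2 b2] [a3 b3] [a4 b4].
rewrite !lecE /= => /andP[/eqP im4 _] /andP[/eqP im1 _].
move=> /andP[/eqP im_1i _] /andP[/eqP im_11 _].
by apply/eqP; rewrite eq_complex /=; apply/andP; split; apply/eqP; lra.
Qed.

Lemma psd_conj_entry (i j : 'I_d) : rho j i = (rho i j)^*.
Proof. exact: (hermitianP rho).1 psd_hermitian i j. Qed.

Lemma psd_entry_quad (i j : 'I_d) (s : R) :
  let n := Re (rho i j) ^+ 2 + Im (rho i j) ^+ 2 in
  0 <= s ^+ 2 * Re (rho i i) - 2 * s * n + n * Re (rho j j).
Proof.
have := psd_form2 i j (cR s) (- (rho i j)^*).
rewrite (psd_conj_entry i j) (ge0_cR (psd_diag i)) (ge0_cR (psd_diag j)).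
move: (Re (rho i i)) (Re (rho j j)) => p q.
case: (rho i j) => a b; rewrite lecE /= => /andP[_].
by congr (0 <= _); ring.
Qed.

Lemma psd_entry_bound (i j : 'I_d) :
  Re (rho i j) ^+ 2 + Im (rho i j) ^+ 2 <= Re (rho i i) * Re (rho j j).
Proof.
have Re_diag_ge0 k : 0 <= Re (rho k k).
  by have := psd_diag k; rewrite lecE => /andP[].
apply: le_mul_of_quadratics_ge0 => // s; first exact: psd_entry_quad.
have := psd_entry_quad j i s.
by rewrite (psd_conj_entry i j) Re_conjc Im_conjc sqrrN.
Qed.

End PositiveSemidefinite.

Lemma density_hs_dot_le1 (R : realType) d (rho : 'M[R[i]]_d) :
  density rho -> hs_dot rho rho <= 1.
Proof.
case=> rho_psd tr_rho.
pose p i := complex.Re (rho i i).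
have sum_p : \sum_i p i = 1 by rewrite /p -raddf_sum -/(\tr rho) tr_rho.
apply: le_trans (_ : \sum_i \sum_j p i * p j <= 1).
  apply: ler_sum => i _; apply: ler_sum => j _.
  by rewrite -!expr2; apply: psd_entry_bound.
by rewrite -big_distrlr /= sum_p mulr1.
Qed.

Lemma corrected_sqr_gap (R : realFieldType) (eps t g o : R) :
  3 / 4 * eps < `|t - g| -> `|t - o| <= eps / 4 ->
  (t - o) ^+ 2 + eps ^+ 2 / 2 <= (t - g) ^+ 2.
Proof.
rewrite ler_norml => gap /andP[lo hi].
have : (3 / 4 * eps) ^+ 2 < (t - g) ^+ 2.
  by move: gap; rewrite ltr_normr => /orP[] gap; nra.
nra.
Qed.

Section HSLearner.
Variables (R : realType) (d : nat).
Local Notation C := R[i].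
Local Notation entry := (sentry R d 1).

Definition correction (e : entry) : 'M[C]_d :=
  if e.2 is Some o then cR (o - e.1.2) *: e.1.1.1 else 0.

Definition estimate (h : seq entry) : 'M[C]_d := \sum_(e <- h) correction e.

Definition hs_guess (h : seq entry) (O : 'M[C]_d) (_ : 'I_1) : R :=
  complex.Re (\tr (O *m estimate h)).

Lemma identity_instr_complete (h : seq entry) (O : 'M[C]_d) :
  \sum_(g < 1) adj (1%:M : 'M[C]_(d ^ 0 * 1)) *m 1%:M = 1%:M.
Proof. by rewrite big_ord1 adj1 mulmx1. Qed.

Definition hs_learner : student R d :=
  @Student R d 0 0 1 (fun _ _ _ => 1%:M) hs_guess identity_instr_complete.

Lemma estimate_rcons h e : estimate (rcons h e) = estimate h + correction e.
Proof. by rewrite /estimate -cats1 big_cat big_seq1. Qed.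

Lemma nmistakes_rcons h (e : entry) :
  nmistakes (rcons h e) = (nmistakes h + (e.2 != None))%N.
Proof. by rewrite /nmistakes -cats1 count_cat /= addn0. Qed.

Lemma mxtrace_init_state (rho : 'M[C]_d) : \tr (init_state hs_learner rho) = 1.
Proof.
rewrite /init_state /mxtrace big_ord1 !mxE eqxx.
by case: (mxtens_unindex _) => a b /=; rewrite [b]ord1 eqxx mul1r.
Qed.

Variables (rho : 'M[C]_d) (eps : R) (adv : adversary R d) (T : teacher R d).
Hypotheses (rho_density : density rho) (adv_unit : forall h, unitvec (adv h))
  (T_good : good_teacher rho eps T) (eps_gt0 : 0 < eps).

Definition round (h : seq entry) : entry :=
  let O := proj1 (adv (vis h)) in
  let og := hs_guess h O ord0 in (O, ord0, og, T (vis h) O og).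

Definition potential (h : seq entry) : R :=
  hs_dot (rho - estimate h) (rho - estimate h)
  + (nmistakes h)%:R * (eps ^+ 2 / 2).

Lemma potential_round_le h : potential (rcons h (round h)) <= potential h.
Proof.
rewrite /potential estimate_rcons nmistakes_rcons /round /=.
set O := proj1 _; set og := hs_guess _ _ _.
have O_unit := adv_unit (vis h).
have [_ [pass_if_close correct_value]] := T_good (vis h) og O_unit.
rewrite -/O in pass_if_close correct_value.
case T_E: (T (vis h) O og) => [o|] /=; last by rewrite addr0 addn0.
have t_ge0 : 0 <= \tr (O *m rho).
  by rewrite mxtrace_proj1_mul; apply: rho_density.1.
have t_E : complex.Re (\tr (O *m rho)) = hs_dot O rho.
  exact: hermitian_Re_trace_mul (proj1_hermitian _).
have og_E : og = hs_dot O (estimate h).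
  exact: hermitian_Re_trace_mul (proj1_hermitian _).
have gap : 3 / 4 * eps < `|hs_dot O rho - og|.
  rewrite ltNge; apply/negP => close.
  by move: pass_if_close; rewrite norm_sub_cR // lecR t_E T_E => /(_ close).
have close : `|hs_dot O rho - o| <= eps / 4.
  by move: (correct_value o T_E); rewrite norm_sub_cR // lecR t_E.
have := corrected_sqr_gap gap close.
rewrite opprD addrA hs_dot_subZ /= hs_dot_proj1 // (hs_dotBr O) -og_E natrD.
nra.
Qed.

Lemma runp_hs_learner n (sigma : 'M[C]_(d ^ 0 * 1)) h :
  potential h <= 1 ->
  runp (S := hs_learner) adv T (2 / eps ^+ 2) n sigma h = \tr sigma.
Proof.
elim: n sigma h => [|n IH] sigma h bounded /=.
  rewrite ifT // ler_pdivlMr ?exprn_gt0 //.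
  have := hs_dot_self_ge0 (rho - estimate h).
  by move: bounded; rewrite /potential; nra.
rewrite big_ord1 adj1 mul1mx mulmx1; apply: IH.
exact: le_trans (potential_round_le h) bounded.
Qed.

End HSLearner.

Lemma ln_natr_ge0 (R : realType) (M : nat) : 0 <= ln (M%:R : R).
Proof. by case: M => [|M]; [rewrite ln0 | apply: ln_ge0; rewrite ler1n]. Qed.

Theorem mainTheorem14 (R : realType) :
  exists (c : R) (a : nat), 0 < c /\
  forall (d M : nat) (eps delta : R),
    0 < eps < 1 -> 0 < delta < 1 ->
    exists S : student R d,
      (ncopies S)%:R
        <= c * ln (M%:R) / eps ^+ 3 * (1 + ln (1 / eps) + ln (1 / delta)) ^+ a /\
      forall (rho : 'M[R[i]]_d) (adv : adversary R d) (T : teacher R d),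
        density rho ->
        (forall h, unitvec (adv h)) ->
        good_teacher rho eps T ->
        cR (1 - delta) <= success_prob S rho adv T M (c / eps ^+ 2).
Proof.
exists 2, 0%N; split=> // d M eps delta /andP[eps_gt0 _] /andP[delta_gt0 _].
exists (hs_learner R d); split=> [|rho adv T rho_density adv_unit T_good].
  by rewrite expr0 mulr1 divr_ge0 ?mulr_ge0 ?ln_natr_ge0 ?exprn_ge0 ?ltW.
rewrite /success_prob (runp_hs_learner rho_density adv_unit T_good eps_gt0).
  by rewrite mxtrace_init_state lecR gerDl oppr_le0 ltW.
rewrite /potential /estimate big_nil subr0 mul0r addr0.
exact: density_hs_dot_le1.
Qed.
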